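(* Let $A$ be a quasi implicative ordered combinatory algebra, and for $a,b\in A$ put $a\,\sharp\,b=\inf\{c\in A: a\le (b\to c)\}$. Then: (1) for all $a,b\in A$, $ab\le a\,\sharp\,b$; (2) if $A$ is an implicative ordered combinatory algebra with adjunctor $\mathsf e$, then for all $a,b\in A$, $(\mathsf e\, a)\,\sharp\, b\le ab$; (3) if $A$ is a full adjunction implicative ordered combinatory algebra, then for all $a,b\in A$, $a\,\sharp\,b=ab$.
   Context: A quasi implicative ordered combinatory algebra consists of an inf-complete partially ordered set $(A,\le)$ with a binary operation (application) $(a,b)\mapsto ab$, monotone in both arguments (associating to the left), a binary operation (implication) $(a,b)\mapsto a\to b$, antimonotone in the first and monotone in the second argument, elements $\mathsf s,\mathsf k\in A$ such that for all $a,b,c\in A$: $\mathsf k ab\le a$; $\mathsf s abc\le ac(bc)$; and (PA) if $a\le b\to c$ then $ab\le c$; together with a subset $\Phi\subseteq A$ (filter) closed under application containing $\mathsf s,\mathsf k$. It is an implicative ordered combinatory algebra (with adjunctor $\mathsf e$) if moreover there is $\mathsf e\in\Phi$ such that $ab\le c$ implies $\mathsf e a\le b\to c$. It is a full adjunction implicative ordered combinatory algebra if for all $a,b,c$, $ab\le c$ implies $a\le b\to c$. *)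

Record QIOCA := {
  carrier :> Type;
  le : carrier -> carrier -> Prop;
  le_refl : forall a, le a a;
  le_trans : forall a b c, le a b -> le b c -> le a c;
  le_antisym : forall a b, le a b -> le b a -> a = b;
  inf : (carrier -> Prop) -> carrier;
  inf_lb : forall (X : carrier -> Prop) x, X x -> le (inf X) x;
  inf_glb : forall (X : carrier -> Prop) y,
      (forall x, X x -> le y x) -> le y (inf X);
  app : carrier -> carrier -> carrier;
  app_mono : forall a a' b b', le a a' -> le b b' -> le (app a b) (app a' b');
  imp : carrier -> carrier -> carrier;
  imp_mono : forall a a' b b', le a' a -> le b b' -> le (imp a b) (imp a' b');
  s_ : carrier;
  k_ : carrier;
  k_ax : forall a b, le (app (app k_ a) b) a;
  s_ax : forall a b c,
      le (app (app (app s_ a) b) c) (app (app a c) (app b c));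
  PA_ax : forall a b c, le a (imp b c) -> le (app a b) c;
  filter : carrier -> Prop;
  filter_app : forall a b, filter a -> filter b -> filter (app a b);
  filter_s : filter s_;
  filter_k : filter k_
}.

Definition is_adjunctor (A : QIOCA) (e : A) : Prop :=
  filter A e /\
  forall a b c : A, le A (app A a b) c -> le A (app A e a) (imp A b c).

Definition full_adjunction (A : QIOCA) : Prop :=
  forall a b c : A, le A (app A a b) c -> le A a (imp A b c).

Definition sharp (A : QIOCA) (a b : A) : A :=
  inf A (fun c => le A a (imp A b c)).


Section Sharp.

Variable A : QIOCA.

Lemma sharp_le (a b c : A) : le A a (imp A b c) -> le A (sharp A a b) c.
Proof. intro Hc. now apply inf_lb. Qed.

Lemma app_le_sharp (a b : A) : le A (app A a b) (sharp A a b).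
Proof. apply inf_glb. intros c Hc. now apply PA_ax. Qed.

Lemma sharp_adjunctor_le_app (e : A) :
  is_adjunctor A e -> forall a b : A, le A (sharp A (app A e a) b) (app A a b).
Proof. intros [_ He] a b. apply sharp_le, He, le_refl. Qed.

Lemma sharp_full_adjunction :
  full_adjunction A -> forall a b : A, sharp A a b = app A a b.
Proof.
  intros Hfull a b. apply le_antisym.
  - apply sharp_le, Hfull, le_refl.
  - apply app_le_sharp.
Qed.

End Sharp.

Theorem mainTheorem1 (A : QIOCA) :
  (forall a b : A, le A (app A a b) (sharp A a b)) /\
  (forall e : A, is_adjunctor A e ->
     forall a b : A, le A (sharp A (app A e a) b) (app A a b)) /\
  (full_adjunction A -> forall a b : A, sharp A a b = app A a b).
Proof.
  split; [|split].
  - apply app_le_sharp.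
  - apply sharp_adjunctor_le_app.
  - apply sharp_full_adjunction.
Qed.
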